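(* Let $\mathcal{P}^d=(\mathcal{D},\varphi,\mathcal{E})$ be a trembling-hand problem for $\mathrm{LTL}_f$ planning in a deterministic domain $\mathcal{D}=(S,s_0,A,F_d,L)$, let $\mathcal{M}$ be the MDP constructed from it, let $\mathcal{M}^\times=\mathcal{M}\times Aut_\varphi$ be the product MDP with goal set $G$ (see context). If $\sigma_m^*$ is an optimal strategy of $\mathcal{M}^\times$ for reaching $G$ (i.e., it maximizes the probability of eventually visiting $G$), then the strategy $\sigma_p^*$ on $\mathcal{D}$ defined by $\sigma_p^*(\rho)=\sigma_m^*(\rho^\times)$ for every finite path $\rho$ of $\mathcal{D}$ is an optimal strategy for $\mathcal{P}^d$.
   Context: $\mathrm{LTL}_f$ is linear temporal logic on finite nonempty traces over propositions $Prop$. For $\varphi$ let $Aut_\varphi=(2^{Prop},Q,q_0,\delta,acc)$ be a DFA accepting exactly the finite traces satisfying $\varphi$. A deterministic domain $\mathcal{D}=(S,s_0,A,F_d,L)$: finite states $S$, initial $s_0$, finite actions $A$, applicable actions $A(s)\subseteq A$ (nonempty), successor $F_d(s,a)$ for $a\in A(s)$, labelling $L:S\to2^{Prop}$. Finite paths are alternating sequences $s_0a_0s_1\cdots s_k$ with $a_i\in A(s_i)$; an agent strategy maps finite paths to actions applicable at the last state. Errors $\mathcal{E}=\{err(s,a)\}$: for $s\in S,a\in A(s)$, $err(s,a)$ is a distribution over $A(s)$ (probability of actually instructing $a'$ when intending $a$). Given strategy $\sigma_p$, perturbed paths are sequences $(s_0,a_0,a_0')(s_1,a_1,a_1')\cdots$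 with $a_i=\sigma_p(s_0a_0\cdots a_{i-1}s_i)$, $a_i'$ drawn from $err(s_i,a_i)$, $s_{i+1}=F_d(s_i,a_i')$. $\Pr_{\mathcal{D}}^{\sigma_p,\mathcal{E}}(\varphi)$ is the probability that some $k\ge0$ has $L(s_0)\cdots L(s_k)\models\varphi$; a strategy maximizing it is optimal for $\mathcal{P}^d$. Constructed MDP $\mathcal{M}=(S,s_0,A,\mathcal{T},L)$: same states, actions, applicability and labels as $\mathcal{D}$, with $\mathcal{T}(s,a,s')=\sum_{a'\in A(s):F_d(s,a')=s'}err(s,a)(a')$. Product MDP $\mathcal{M}^\times$: states $S\times Q$, initial state $(s_0,\delta(q_0,L(s_0)))$, actions applicable at $(s,q)$ are $A(s)$, and $\mathcal{T}^\times((s,q),a,(s',q'))=\mathcal{T}(s,a,s')$ if $q'=\delta(q,L(s'))$ and $0$ otherwise. Goal set $G=\{(s,q): q\in acc\}$. Strategies of $\mathcal{M}^\times$ are functions from its finite paths to applicable actions. For a finite path $\rho=s_0a_0s_1\cdots s_k$ of $\mathcal{D}$, $\rho^\times=(s_0,q_0')a_0(s_1,q_1')\cdots(s_k,q_k')$ where $q_0'=\delta(q_0,L(s_0))$ and $q_{i+1}'=\delta(q_i',L(s_{i+1}))$. *)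

From HB Require Import structures.
From mathcomp Require Import all_boot all_order all_algebra.
From mathcomp Require Import boolp classical_sets reals.
Set Implicit Arguments. Unset Strict Implicit. Unset Printing Implicit Defensive.
Import Order.TTheory GRing.Theory Num.Theory.
Local Open Scope ring_scope.

Inductive ltlf (P : Type) : Type :=
  | LTrue
  | LAtom of P
  | LNot of ltlf P
  | LAnd of ltlf P & ltlf P
  | LNext of ltlf P                 (* strong next *)
  | LUntil of ltlf P & ltlf P.

Fixpoint holds (P : finType) (w : seq {set P}) (i : nat) (f : ltlf P) : bool :=
  match f with
  | LTrue => true
  | LAtom p => p \in nth (@finset.set0 P) w i
  | LNot g => ~~ holds w i g
  | LAnd g h => holds w i g && holds w i h
  | LNext g => (i.+1 < size w)%N && holds w i.+1 g
  | LUntil g h =>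
      [exists j : 'I_(size w),
         [&& (i <= j)%N, holds w j h &
             [forall k : 'I_(size w), ((i <= k)%N && (k < j)%N) ==> holds w k g]]]
  end.

Definition ltlf_sat (P : finType) (f : ltlf P) (w : seq {set P}) : bool :=
  (0 < size w)%N && holds w 0 f.

Definition dfa_of (P Q : finType) (q0 : Q) (delta : Q -> {set P} -> Q)
  (acc : {set Q}) (f : ltlf P) : Prop :=
  forall w : seq {set P}, (0 < size w)%N ->
    (foldl delta q0 w \in acc) = ltlf_sat f w.

(* A finite path x0 a0 x1 ... xk starting at the initial state x0 is encoded by
   x0 and the list [:: (a0,x1); ...; (a_{k-1},xk)].                        *)
Fixpoint path_ok (X : Type) (A : finType) (act : X -> {set A}) (x : X)
    (h : seq (A * X)) : Prop :=
  match h with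
  | [::] => True
  | (a, x') :: r => a \in act x /\ path_ok act x' r
  end.

Definition last_state (X A : Type) (x0 : X) (h : seq (A * X)) : X :=
  last x0 (map snd h).

Definition strategy_ok (X : Type) (A : finType) (act : X -> {set A}) (x0 : X)
    (sigma : seq (A * X) -> A) : Prop :=
  forall h, path_ok act x0 h -> sigma h \in act (last_state x0 h).

Section Reach.
Variables (R : realType) (X A : finType).
Variables (T : X -> A -> X -> R) (G : {set X}) (sigma : seq (A * X) -> A).

(* probability, from history h currently at state x, of visiting G within n
   further steps (G counts if already visited at x) *)
Fixpoint reachN (n : nat) (h : seq (A * X)) (x : X) : R :=
  if x \in G then 1 else
  match n with
  | 0 => 0
  | n'.+1 => \sum_(x' : X) T x (sigma h) x' * reachN n' (rcons h (sigma h, x')) x'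
  end.
End Reach.

(* probability of eventually visiting G: the increasing limit (= supremum) of the
   probabilities of visiting G within n steps *)
Definition reach_prob (R : realType) (X A : finType) (T : X -> A -> X -> R)
    (G : {set X}) (x0 : X) (sigma : seq (A * X) -> A) : R :=
  sup (range (fun n => reachN T G sigma n [::] x0)).

Definition mdp_optimal (R : realType) (X A : finType) (act : X -> {set A})
    (T : X -> A -> X -> R) (G : {set X}) (x0 : X) (sigma : seq (A * X) -> A) : Prop :=
  strategy_ok act x0 sigma /\
  forall sigma', strategy_ok act x0 sigma' ->
    reach_prob T G x0 sigma' <= reach_prob T G x0 sigma.

Definition errors_ok (R : realType) (S A : finType) (Aapp : S -> {set A})
    (err : S -> A -> A -> R) : Prop :=
  forall s a, a \in Aapp s ->
    [/\ forall a', 0 <= err s a a',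
        forall a', a' \notin Aapp s -> err s a a' = 0
      & \sum_(a' : A) err s a a' = 1].

Definition dtrace (S A P : finType) (L : S -> {set P}) (s0 : S)
    (h : seq (A * S)) : seq {set P} :=
  L s0 :: map (fun p => L p.2) h.

Section Trembling.
Variables (R : realType) (S A P : finType).
Variables (s0 : S) (F_d : S -> A -> S) (L : S -> {set P}).
Variables (err : S -> A -> A -> R) (phi : ltlf P) (sigma : seq (A * S) -> A).

(* Perturbed executions: at the current path rho (intended actions), with last
   state s, the agent intends a = sigma rho, the action a' actually performed is
   drawn from err s a, and the next state is F_d s a'.  [trembleN n rho] is the
   probability that, continuing from rho for at most n more steps, some prefix
   trace L(s0)...L(sk) satisfies phi (checking already at rho itself). *)
Fixpoint trembleN (n : nat) (rho : seq (A * S)) : R :=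
  if ltlf_sat phi (dtrace L s0 rho) then 1 else
  match n with
  | 0 => 0
  | n'.+1 =>
      let s := last_state s0 rho in
      let a := sigma rho in
      \sum_(a' : A) err s a a' * trembleN n' (rcons rho (a, F_d s a'))
  end.
End Trembling.

Definition tremble_prob (R : realType) (S A P : finType) (s0 : S)
    (F_d : S -> A -> S) (L : S -> {set P}) (err : S -> A -> A -> R)
    (phi : ltlf P) (sigma : seq (A * S) -> A) : R :=
  sup (range (fun n => trembleN s0 F_d L err phi sigma n [::])).

Definition trembling_optimal (R : realType) (S A P : finType) (s0 : S)
    (Aapp : S -> {set A}) (F_d : S -> A -> S) (L : S -> {set P})
    (err : S -> A -> A -> R) (phi : ltlf P) (sigma : seq (A * S) -> A) : Prop :=
  strategy_ok Aapp s0 sigma /\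
  forall sigma', strategy_ok Aapp s0 sigma' ->
    tremble_prob s0 F_d L err phi sigma' <= tremble_prob s0 F_d L err phi sigma.

Definition mdpT (R : realType) (S A : finType) (Aapp : S -> {set A})
    (F_d : S -> A -> S) (err : S -> A -> A -> R) (s : S) (a : A) (s' : S) : R :=
  \sum_(a' in Aapp s | F_d s a' == s') err s a a'.

Definition prodT (R : realType) (S A P Q : finType) (Aapp : S -> {set A})
    (F_d : S -> A -> S) (L : S -> {set P}) (err : S -> A -> A -> R)
    (delta : Q -> {set P} -> Q) (x : S * Q) (a : A) (x' : S * Q) : R :=
  if x'.2 == delta x.2 (L x'.1) then mdpT Aapp F_d err x.1 a x'.1 else 0.

Definition prodAct (S A Q : finType) (Aapp : S -> {set A}) (x : S * Q) : {set A} :=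
  Aapp x.1.

Definition prodInit (S P Q : finType) (s0 : S) (L : S -> {set P}) (q0 : Q)
    (delta : Q -> {set P} -> Q) : S * Q := (s0, delta q0 (L s0)).

Definition prodGoal (S Q : finType) (acc : {set Q}) : {set S * Q} :=
  [set x | x.2 \in acc].

Fixpoint lift_path (S A P Q : finType) (L : S -> {set P})
    (delta : Q -> {set P} -> Q) (q : Q) (rho : seq (A * S)) : seq (A * (S * Q)) :=
  match rho with
  | [::] => [::]
  | (a, s') :: r => let q' := delta q (L s') in (a, (s', q')) :: lift_path L delta q' r
  end.

From mathcomp Require Import all_boot all_order all_algebra.
From mathcomp Require Import boolp classical_sets reals.
Set Implicit Arguments. Unset Strict Implicit. Unset Printing Implicit Defensive.
Import Order.TTheory GRing.Theory Num.Theory.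
Local Open Scope ring_scope.

(* Lifting a path rho of D to the product MDP tags each state with the run of
   the DFA on the trace of rho, so the lifted path ends in the goal set exactly
   when that trace satisfies phi.  One step of the product from (s, q) under a
   moves to (F_d s a', delta q (L (F_d s a'))) with probability err s a a'
   (summed over the a' with the same successor), which is exactly one perturbed
   step of D.  Hence a strategy on D and any product strategy agreeing with it
   on lifted paths have the same n-step values, and so the same value.  Both
   sigma_m with its pull-back along the lift and any sigma' with its push-forward
   sigma' o proj are such pairs, so optimality of sigma_m transfers. *)

Lemma path_ok_rcons (X : Type) (A : finType) (act : X -> {set A}) x h a x' :
  path_ok act x h -> a \in act (last_state x h) -> path_ok act x (rcons h (a, x')).
Proof.
elim: h x => [|[b y] h IH] x /=; first by [].
by move=> [b_ok h_ok] a_ok; split => //; apply: IH.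
Qed.

Lemma last_state_rcons (X A : Type) (x : X) h (a : A) x' :
  last_state x (rcons h (a, x')) = x'.
Proof. by rewrite /last_state map_rcons last_rcons. Qed.

Section PathLift.
Variables (S A P Q : finType) (Aapp : S -> {set A}).
Variables (L : S -> {set P}) (delta : Q -> {set P} -> Q).

Definition aut_run (q : Q) (rho : seq (A * S)) : Q :=
  foldl delta q (map (fun p => L p.2) rho).

Definition proj_path (h : seq (A * (S * Q))) : seq (A * S) :=
  map (fun p => (p.1, p.2.1)) h.

Lemma aut_run_rcons q rho a s' :
  aut_run q (rcons rho (a, s')) = delta (aut_run q rho) (L s').
Proof. by rewrite /aut_run map_rcons foldl_rcons. Qed.

Lemma lift_path_rcons q rho a s' :
  lift_path L delta q (rcons rho (a, s')) =
  rcons (lift_path L delta q rho) (a, (s', delta (aut_run q rho) (L s'))).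
Proof. by elim: rho q => [|[b t] rho IH] q //=; rewrite IH. Qed.

Lemma last_state_lift q s rho :
  last_state (s, q) (lift_path L delta q rho) = (last_state s rho, aut_run q rho).
Proof. by elim: rho s q => [|[b t] rho IH] s q //=; rewrite /last_state /= -IH. Qed.

Lemma path_ok_lift q s rho :
  path_ok Aapp s rho -> path_ok (prodAct (Q:=Q) Aapp) (s, q) (lift_path L delta q rho).
Proof. by elim: rho s q => [|[b t] rho IH] s q //= [b_ok /IH]. Qed.

Lemma proj_lift_path q rho : proj_path (lift_path L delta q rho) = rho.
Proof. by elim: rho q => [|[b t] rho IH] q //=; rewrite IH. Qed.

Lemma path_ok_proj x h :
  path_ok (prodAct (Q:=Q) Aapp) x h -> path_ok Aapp x.1 (proj_path h).
Proof. by elim: h x => [|[b y] h IH] x //= [b_ok /IH]. Qed.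

Lemma last_state_proj x h : (last_state x h).1 = last_state x.1 (proj_path h).
Proof.
by elim: h x => [|[b y] h IH] x //=; rewrite /last_state /= -/(last_state _ _) IH.
Qed.

End PathLift.

Section ProductStep.
Variables (R : realType) (S A P Q : finType) (Aapp : S -> {set A}).
Variables (F_d : S -> A -> S) (L : S -> {set P}) (err : S -> A -> A -> R).
Variables (delta : Q -> {set P} -> Q).

Lemma sum_mdpT s a (g : S -> R) :
  (forall a', a' \notin Aapp s -> err s a a' = 0) ->
  \sum_(s' : S) mdpT Aapp F_d err s a s' * g s' =
  \sum_(a' : A) err s a a' * g (F_d s a').
Proof.
move=> err0.
rewrite [RHS](bigID (fun a' => a' \in Aapp s)) /= [X in _ + X]big1 ?addr0; last first.
  by move=> a' /err0 ->; rewrite mul0r.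
rewrite (partition_big (F_d s) xpredT) //=.
apply: eq_bigr => s' _; rewrite /mdpT big_distrl /=.
by apply: eq_bigr => a' /andP[_ /eqP ->].
Qed.

Lemma sum_prodT s q a (f : S * Q -> R) :
  \sum_(x' : S * Q) prodT Aapp F_d L err delta (s, q) a x' * f x' =
  \sum_(s' : S) mdpT Aapp F_d err s a s' * f (s', delta q (L s')).
Proof.
pose F s' q' := prodT Aapp F_d L err delta (s, q) a (s', q') * f (s', q').
rewrite (eq_bigr (fun x' => F x'.1 x'.2)); last by move=> [].
rewrite -(pair_bigA _ F); apply: eq_bigr => s' _ /=; rewrite /F.
rewrite (bigD1 (delta q (L s'))) //= big1 ?addr0; first by rewrite /prodT /= eqxx.
by move=> q' /negPf q'_neq; rewrite /prodT /= q'_neq mul0r.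
Qed.

End ProductStep.

Section Correspondence.
Variables (R : realType) (S A P Q : finType).
Variables (s0 : S) (Aapp : S -> {set A}) (F_d : S -> A -> S) (L : S -> {set P}).
Variables (err : S -> A -> A -> R) (phi : ltlf P).
Variables (q0 : Q) (delta : Q -> {set P} -> Q) (acc : {set Q}).
Hypothesis err_ok : errors_ok Aapp err.
Hypothesis aut_ok : dfa_of q0 delta acc phi.

Local Notation q1 := (delta q0 (L s0)).
Local Notation lift := (lift_path (A:=A) L delta q1).
Local Notation run := (aut_run (A:=A) L delta q1).
Local Notation Tx := (prodT Aapp F_d L err delta).
Local Notation G := (prodGoal S acc).

Lemma sat_dtrace rho : ltlf_sat phi (dtrace L s0 rho) = (run rho \in acc).
Proof. by rewrite -aut_ok //= /aut_run -map_comp. Qed.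

Variables (tau : seq (A * (S * Q)) -> A) (sig : seq (A * S) -> A).
Hypothesis sig_ok : strategy_ok Aapp s0 sig.
Hypothesis tau_lift : forall rho, path_ok Aapp s0 rho -> tau (lift rho) = sig rho.

Lemma reachN_lift n rho : path_ok Aapp s0 rho ->
  reachN Tx G tau n (lift rho) (last_state s0 rho, run rho) =
  trembleN s0 F_d L err phi sig n rho.
Proof.
elim: n rho => [|n IH] rho rho_ok /=; rewrite /prodGoal inE /= sat_dtrace //.
case: ifP => // _; rewrite tau_lift //.
set s := last_state s0 rho; set a := sig rho.
have a_ok : a \in Aapp s by exact: sig_ok.
have [_ err0 _] := err_ok a_ok.
rewrite sum_prodT sum_mdpT //; apply: eq_bigr => a' _.
rewrite -IH; last exact: path_ok_rcons.
by rewrite lift_path_rcons aut_run_rcons last_state_rcons.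
Qed.

Lemma reach_prob_lift :
  reach_prob Tx G (prodInit s0 L q0 delta) tau = tremble_prob s0 F_d L err phi sig.
Proof.
rewrite /reach_prob /tremble_prob; do 2 apply: f_equal.
by apply: funext => n; exact: (reachN_lift n (rho:=[::])).
Qed.

End Correspondence.

Theorem theorem2 (R : realType) (S A P Q : finType)
    (s0 : S) (Aapp : S -> {set A}) (F_d : S -> A -> S) (L : S -> {set P})
    (err : S -> A -> A -> R) (phi : ltlf P)
    (q0 : Q) (delta : Q -> {set P} -> Q) (acc : {set Q})
    (Aapp_nonempty : forall s, exists a, a \in Aapp s)
    (err_ok : errors_ok Aapp err)
    (aut_ok : dfa_of q0 delta acc phi)
    (sigma_m : seq (A * (S * Q)) -> A)
    (sigma_m_opt : mdp_optimal (prodAct (Q:=Q) Aapp) (prodT Aapp F_d L err delta)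
                     (prodGoal S acc) (prodInit s0 L q0 delta) sigma_m) :
  trembling_optimal s0 Aapp F_d L err phi
    (fun rho => sigma_m (lift_path L delta (delta q0 (L s0)) rho)).
Proof.
have [sigma_m_ok sigma_m_max] := sigma_m_opt.
set sigma_p := fun rho => _.
have sigma_p_ok : strategy_ok Aapp s0 sigma_p.
  move=> rho /(path_ok_lift (Q:=Q) L delta (delta q0 (L s0))) /sigma_m_ok.
  by rewrite /prodInit last_state_lift.
split=> // sigma' sigma'_ok.
have pushed_ok : strategy_ok (prodAct (Q:=Q) Aapp) (prodInit s0 L q0 delta)
                   (fun h => sigma' (proj_path h)).
  by move=> h /path_ok_proj /sigma'_ok; rewrite /prodAct last_state_proj.
rewrite -(reach_prob_lift F_d err_ok aut_ok (tau:=sigma_m) sigma_p_ok) //.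
rewrite -(reach_prob_lift F_d err_ok aut_ok (tau:=fun h => sigma' (proj_path h)) sigma'_ok).
  exact: sigma_m_max.
by move=> rho _; rewrite proj_lift_path.
Qed.
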